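(* Let $U$ be a projection family and let $\Phi$ be a Følner sequence in $\mathbb{N}$. For every $f\in L^2(\mathbb{N},\Phi)$ there exist a subsequence $\Psi$ of $\Phi$ and $f_U\in U(\Psi)$ such that: (1) $f-f_U\in U(\Psi)^\perp$; (2) $\|f-f_U\|_\Psi=\inf\{\|f-g\|_\Psi: g\in U(\Psi)\}$; (3) if $f$ takes values in an interval $[a,b]$ then $f_U$ takes values in $[a,b]$.
   Context: A Følner sequence in $\mathbb{N}$ is a sequence $\Phi\colon N\mapsto\Phi_N$ of finite non-empty subsets of $\mathbb{N}$ with $|(\Phi_N+m)\triangle\Phi_N|/|\Phi_N|\to0$ for all $m\in\mathbb{N}$. $\|f\|_\Phi=\big(\limsup_{N\to\infty}\frac{1}{|\Phi_N|}\sum_{n\in\Phi_N}|f(n)|^2\big)^{1/2}$, $L^2(\mathbb{N},\Phi)=\{f\colon\mathbb{N}\to\mathbb{C}:\|f\|_\Phi<\infty\}$, and $\langle f,h\rangle_\Phi=\lim_{N\to\infty}\frac{1}{|\Phi_N|}\sum_{n\in\Phi_N}f(n)\overline{h(n)}$ when the limit exists. A projection family is an assignment $\Phi\mapsto U(\Phi)$, defined for every Følner sequence $\Phi$, such that: $U(\Phi)$ is a vector subspace of $L^2(\mathbb{N},\Phi)$; $U(\Phi)$ contains the constant functions and is closed under pointwise complex conjugation; $\langle u,v\rangle_\Phi$ exists for all $u,v\in U(\Phi)$; if $u,v\in U(\Phi)$ are real-valued then $n\mapsto\max\{u(n),v(n)\}$ is in $U(\Phi)$; $U(\Phi)$ is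 closed in the topology induced by $\|\cdot\|_\Phi$; and if $\Psi$ eventually agrees with a subsequence of $\Phi$ then $U(\Psi)\supset U(\Phi)$. For such $U$, $U(\Phi)^\perp=\{v\in L^2(\mathbb{N},\Phi): \langle u,v\rangle_\Phi \text{ exists and equals } 0 \text{ for all } u\in U(\Phi)\}$. *)

From Stdlib Require Import Reals List Arith.
From Coquelicot Require Import Coquelicot.
Open Scope R_scope.

(* A finite subset of N is represented by a duplicate-free list. *)
Definition seq_sets := nat -> list nat.

Definition memb (x : nat) (l : list nat) : bool := existsb (Nat.eqb x) l.

Definition symdiff_card (A B : list nat) : nat :=
  length (filter (fun x => negb (memb x B)) A) +
  length (filter (fun x => negb (memb x A)) B).

Definition shift (A : list nat) (m : nat) : list nat := map (fun n => (n + m)%nat) A.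

Definition Folner (Phi : seq_sets) : Prop :=
  (forall N, NoDup (Phi N) /\ Phi N <> nil) /\
  (forall m : nat,
     is_lim_seq (fun N => INR (symdiff_card (shift (Phi N) m) (Phi N)) / INR (length (Phi N))) 0).

Definition avgR (Phi : seq_sets) (g : nat -> R) (N : nat) : R :=
  fold_right Rplus 0 (map g (Phi N)) / INR (length (Phi N)).

Definition avgC (Phi : seq_sets) (g : nat -> C) (N : nat) : C :=
  Cdiv (fold_right Cplus (RtoC 0) (map g (Phi N))) (RtoC (INR (length (Phi N)))).

Definition sqnorm_limsup (Phi : seq_sets) (f : nat -> C) : Rbar :=
  LimSup_seq (avgR Phi (fun n => (Cmod (f n)) ^ 2)).

Definition L2 (Phi : seq_sets) (f : nat -> C) : Prop :=
  Rbar_lt (sqnorm_limsup Phi f) p_infty.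

(* ||f||_Phi (meaningful for f in L^2(N,Phi)) *)
Definition normPhi (Phi : seq_sets) (f : nat -> C) : R :=
  sqrt (real (sqnorm_limsup Phi f)).

Definition is_inner (Phi : seq_sets) (f h : nat -> C) (z : C) : Prop :=
  filterlim (avgC Phi (fun n => Cmult (f n) (Cconj (h n)))) eventually (locally z).

Definition inner_exists (Phi : seq_sets) (f h : nat -> C) : Prop :=
  exists z, is_inner Phi f h z.

Definition real_valued (f : nat -> C) : Prop := forall n, Im (f n) = 0.

Definition ev_agrees_subseq (Psi Phi : seq_sets) : Prop :=
  exists (phi : nat -> nat) (N0 : nat),
    (forall k, (phi k < phi (S k))%nat) /\
    (forall N, (N0 <= N)%nat -> forall n, In n (Psi N) <-> In n (Phi (phi N))).

Definition projection_family (U : seq_sets -> (nat -> C) -> Prop) : Prop :=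
  (forall Phi, Folner Phi ->
     (forall f, U Phi f -> L2 Phi f) /\
     U Phi (fun _ => RtoC 0) /\
     (forall f g, U Phi f -> U Phi g -> U Phi (fun n => Cplus (f n) (g n))) /\
     (forall (c : C) f, U Phi f -> U Phi (fun n => Cmult c (f n))) /\
     (forall c : C, U Phi (fun _ => c)) /\
     (forall f, U Phi f -> U Phi (fun n => Cconj (f n))) /\
     (forall u v, U Phi u -> U Phi v -> inner_exists Phi u v) /\
     (forall u v, U Phi u -> U Phi v -> real_valued u -> real_valued v ->
        U Phi (fun n => RtoC (Rmax (Re (u n)) (Re (v n))))) /\
     (forall f, L2 Phi f ->
        (forall eps, 0 < eps -> exists u, U Phi u /\
            normPhi Phi (fun n => Cminus (f n) (u n)) < eps) ->
        U Phi f)) /\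
  (forall Phi Psi, Folner Phi -> Folner Psi -> ev_agrees_subseq Psi Phi ->
     forall f, U Phi f -> U Psi f).

Definition in_perp (U : seq_sets -> (nat -> C) -> Prop) (Phi : seq_sets) (v : nat -> C) : Prop :=
  L2 Phi v /\ forall u, U Phi u -> is_inner Phi u v (RtoC 0).

(* First pass to a subsequence [Psi] of [Phi] along which the distance [d] from [f] to [U] cannot
   be lowered by passing to any further subsequence; this is a diagonal argument over near-optimal
   subsequences.  Near-minimizers [g k] in [U(Psi)] then form a Cauchy sequence by the parallelogram
   law, since their midpoints are still at distance at least [d] from [f].  The seminorm is a limsup
   of averages, so a limit is obtained by gluing: along a sparse subsequence of the Følner sets,
   use [g k] on the points first met in the [k]-th chosen set; the sets grow fast enough that the
   points met earlier are negligible.  The glued function is in [U] by closedness and attains [d].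
   Hence [f - h] is orthogonal to [U], otherwise [h + t u] would beat [d] along some subsequence,
   and clamping [h] to the range of [f], which [U] allows through [max], does not increase the
   distance. *)

From Stdlib Require Import Reals List Arith Lia Lra Psatz.
From Stdlib Require Import Classical ClassicalEpsilon FunctionalExtensionality.
From Coquelicot Require Import Coquelicot.
Open Scope R_scope.

(** * Subsequences and Følner sequences *)

Definition increasing (s : nat -> nat) : Prop := forall k, (s k < s (S k))%nat.

Definition subseq (Phi : seq_sets) (s : nat -> nat) : seq_sets := fun N => Phi (s N).

Lemma increasing_lt s : increasing s -> forall a b, (a < b)%nat -> (s a < s b)%nat.
Proof. intros Hs a b Hab; induction Hab; [apply Hs | specialize (Hs m); lia]. Qed.

Lemma increasing_ge_id s : increasing s -> forall n, (n <= s n)%nat.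
Proof. intros Hs n; induction n; [lia | specialize (Hs n); lia]. Qed.

Lemma increasing_id : increasing (fun n => n).
Proof. intro k; lia. Qed.

Lemma increasing_comp s r : increasing s -> increasing r -> increasing (fun n => s (r n)).
Proof. intros Hs Hr k; apply increasing_lt; auto. Qed.

Lemma increasing_of_infinitely_often (P : nat -> Prop) :
  (forall M, exists N, (M <= N)%nat /\ P N) -> exists s, increasing s /\ forall k, P (s k).
Proof.
  intros H.
  assert (next : forall M, {N | (M <= N)%nat /\ P N})
    by (intro M; apply constructive_indefinite_description; auto).
  set (s := fix s k := match k with
                      | 0 => proj1_sig (next 0%nat)
                      | S k' => proj1_sig (next (S (s k')))
                      end).
  exists s; split.
  - intro k. change (s k < proj1_sig (next (S (s k))))%nat.
    destruct (proj2_sig (next (S (s k)))); lia.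
  - intros [|k]; [exact (proj2 (proj2_sig (next 0%nat))) |].
    exact (proj2 (proj2_sig (next (S (s k))))).
Qed.

Lemma eventually_of_subseqs (P : nat -> Prop) :
  (forall r, increasing r -> (forall k, ~ P (r k)) -> False) -> eventually P.
Proof.
  intros H. apply NNPP. intros Hev.
  destruct (increasing_of_infinitely_often (fun N => ~ P N)) as [r [Hr HrP]];
    [| exact (H r Hr HrP)].
  intro M. apply NNPP. intros HM. apply Hev. exists M. intros N HN.
  apply NNPP. intros HPN. apply HM. exists N. auto.
Qed.

Lemma Folner_subseq Phi s : Folner Phi -> increasing s -> Folner (subseq Phi s).
Proof.
  intros [Hne Hshift] Hs. split; [intro N; apply Hne |].
  intro m. apply (is_lim_seq_subseq
    (fun N => INR (symdiff_card (shift (Phi N) m) (Phi N)) / INR (length (Phi N))) 0 s);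
    [| apply Hshift].
  intros P [M HM]. exists M. intros n Hn. apply HM. pose proof (increasing_ge_id s Hs n). lia.
Qed.

Definition ev_subseq (Psi' Psi : seq_sets) : Prop :=
  exists th N0, increasing th /\ forall N, (N0 <= N)%nat -> Psi' N = Psi (th N).

Lemma ev_subseq_subseq Psi s : increasing s -> ev_subseq (subseq Psi s) Psi.
Proof. intros Hs. exists s, 0%nat. auto. Qed.

Lemma memb_In x l : memb x l = true <-> In x l.
Proof.
  unfold memb. rewrite existsb_exists. split.
  - intros [y [Hy Hxy]]. apply Nat.eqb_eq in Hxy. subst; auto.
  - intros H. exists x. split; auto. apply Nat.eqb_refl.
Qed.

Lemma list_max_In (l : list nat) : l <> nil -> In (list_max l) l.
Proof.
  induction l as [|a l IH]; intros Hl; [congruence |].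
  destruct l as [|b l]; [simpl; left; lia |].
  change (list_max (a :: b :: l)) with (Nat.max a (list_max (b :: l))).
  destruct (Nat.max_spec a (list_max (b :: l))) as [[_ ->] | [_ ->]];
    [right; apply IH | left]; easy.
Qed.

(* [max A + 1] lies in [A + 1] but not in [A]. *)
Lemma symdiff_shift1_pos A : A <> nil -> (1 <= symdiff_card (shift A 1) A)%nat.
Proof.
  intros HA. unfold symdiff_card.
  assert (Hin : In (list_max A + 1)%nat (filter (fun x => negb (memb x A)) (shift A 1))).
  { apply filter_In. split; [apply (in_map (fun n => (n + 1)%nat)), list_max_In; auto |].
    destruct (memb (list_max A + 1) A) eqn:E; auto. apply memb_In in E.
    assert (Hle : (list_max A <= list_max A)%nat) by lia.
    apply list_max_le, Forall_forall with (x := (list_max A + 1)%nat) in Hle; auto. lia. }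
  destruct (filter _ (shift A 1)); [destruct Hin | simpl; lia].
Qed.

Lemma Folner_length_pos Psi N : Folner Psi -> 0 < INR (length (Psi N)).
Proof.
  intros [H _]. destruct (H N) as [_ Hne]. destruct (Psi N); [congruence |].
  apply lt_0_INR. simpl; lia.
Qed.

Lemma Folner_length_unbounded Psi K : Folner Psi ->
  eventually (fun N => K <= INR (length (Psi N))).
Proof.
  intros HF. pose proof HF as [Hne Hshift]. specialize (Hshift 1%nat).
  apply is_lim_seq_spec in Hshift.
  assert (Hp : 0 < / (Rabs K + 1)) by (apply Rinv_0_lt_compat; pose proof (Rabs_pos K); lra).
  destruct (Hshift (mkposreal _ Hp)) as [M HM]. exists M. intros N HN.
  specialize (HM N HN). simpl in HM.
  pose proof (Folner_length_pos Psi N HF) as Hl.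
  pose proof (symdiff_shift1_pos (Psi N) (proj2 (Hne N))) as Hs. apply le_INR in Hs. simpl in Hs.
  set (L := INR (length (Psi N))) in *. set (D := INR (symdiff_card _ _)) in *.
  rewrite Rminus_0_r, Rabs_right in HM by (apply Rle_ge, Rdiv_le_0_compat; lra).
  assert (Hinv : / L < / (Rabs K + 1)).
  { apply Rle_lt_trans with (D / L); auto. unfold Rdiv.
    rewrite <- (Rmult_1_l (/ L)) at 1.
    apply Rmult_le_compat_r; [left; apply Rinv_0_lt_compat |]; lra. }
  apply Rinv_lt_cancel in Hinv; [| lra]. pose proof (Rle_abs K). lra.
Qed.

Definition sumR (l : list nat) (g : nat -> R) : R := fold_right Rplus 0 (map g l).

Lemma sumR_plus l g h : sumR l (fun n => g n + h n) = sumR l g + sumR l h.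
Proof. unfold sumR; induction l; simpl; [ring | rewrite IHl; ring]. Qed.

Lemma sumR_scal l c g : sumR l (fun n => c * g n) = c * sumR l g.
Proof. unfold sumR; induction l; simpl; [ring | rewrite IHl; ring]. Qed.

Lemma sumR_app l1 l2 g : sumR (l1 ++ l2) g = sumR l1 g + sumR l2 g.
Proof. unfold sumR; induction l1; simpl; [ring | rewrite IHl1; ring]. Qed.

Lemma sumR_le l g h : (forall n, In n l -> g n <= h n) -> sumR l g <= sumR l h.
Proof.
  unfold sumR; induction l as [|a l IH]; intros H; simpl; [lra |].
  apply Rplus_le_compat; [apply H; left | apply IH; intros; apply H; right]; auto.
Qed.

Lemma sumR_nonneg l g : (forall n, 0 <= g n) -> 0 <= sumR l g.
Proof.
  unfold sumR; induction l; intros H; simpl; [lra | specialize (IHl H); specialize (H a); lra].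
Qed.

Lemma sumR_ge_term l g x : (forall n, 0 <= g n) -> In x l -> g x <= sumR l g.
Proof.
  intros H Hx. apply in_split in Hx as [l1 [l2 ->]].
  rewrite sumR_app. change (sumR (x :: l2) g) with (g x + sumR l2 g).
  pose proof (sumR_nonneg l1 g H). pose proof (sumR_nonneg l2 g H). lra.
Qed.

Lemma sumR_indicator_le S O X : NoDup S -> (forall n, 0 <= X n) ->
  sumR S (fun n => if memb n O then X n else 0) <= sumR O X.
Proof.
  intros HS HX. revert O.
  induction HS as [|a S Ha HS IH]; intros O; [apply sumR_nonneg; auto |].
  change (sumR (a :: S) ?G) with (G a + sumR S G). cbv beta.
  destruct (memb a O) eqn:E; [| specialize (IH O); lra].
  apply memb_In, in_split in E as [O1 [O2 ->]].
  assert (Hdrop : forall n, In n S -> memb n (O1 ++ a :: O2) = memb n (O1 ++ O2)).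
  { intros n Hn. assert (n <> a) by congruence.
    apply Bool.eq_iff_eq_true. rewrite !memb_In, !in_app_iff. simpl. intuition congruence. }
  assert (Hle : sumR S (fun n => if memb n (O1 ++ a :: O2) then X n else 0)
                <= sumR S (fun n => if memb n (O1 ++ O2) then X n else 0))
    by (apply sumR_le; intros n Hn; rewrite Hdrop; auto; lra).
  specialize (IH (O1 ++ O2)). rewrite sumR_app in *.
  change (sumR (a :: O2) X) with (X a + sumR O2 X). lra.
Qed.

Lemma avgR_plus Psi g h N : avgR Psi (fun n => g n + h n) N = avgR Psi g N + avgR Psi h N.
Proof.
  unfold avgR. fold (sumR (Psi N) (fun n => g n + h n)). rewrite sumR_plus.
  unfold sumR, Rdiv. ring.
Qed.

Lemma avgR_scal Psi c g N : avgR Psi (fun n => c * g n) N = c * avgR Psi g N.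
Proof.
  unfold avgR. fold (sumR (Psi N) (fun n => c * g n)). rewrite sumR_scal.
  unfold sumR, Rdiv. ring.
Qed.

Lemma avgR_ext Psi g h N : (forall n, g n = h n) -> avgR Psi g N = avgR Psi h N.
Proof. intros H. apply functional_extensionality in H. now subst. Qed.

Lemma inv_INR_nonneg n : 0 <= / INR n.
Proof.
  destruct n; [simpl; rewrite Rinv_0; lra |].
  apply Rlt_le, Rinv_0_lt_compat, lt_0_INR; lia.
Qed.

Lemma avgR_le Psi g h N :
  (forall n, In n (Psi N) -> g n <= h n) -> avgR Psi g N <= avgR Psi h N.
Proof.
  intros H. apply Rmult_le_compat_r; [apply inv_INR_nonneg | apply (sumR_le (Psi N) g h H)].
Qed.

Lemma avgR_nonneg Psi g N : (forall n, 0 <= g n) -> 0 <= avgR Psi g N.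
Proof.
  intros H. apply Rmult_le_pos; [apply (sumR_nonneg (Psi N) g H) | apply inv_INR_nonneg].
Qed.

Lemma avgR_indicator_le Psi N O X c : Folner Psi -> (forall n, 0 <= X n) ->
  sumR O X <= c * INR (length (Psi N)) -> avgR Psi (fun n => if memb n O then X n else 0) N <= c.
Proof.
  intros HF HX HO. pose proof (Folner_length_pos Psi N HF) as Hl.
  pose proof (sumR_indicator_le (Psi N) O X (proj1 (proj1 HF N)) HX).
  unfold avgR. fold (sumR (Psi N) (fun n => if memb n O then X n else 0)).
  apply Rmult_le_reg_r with (INR (length (Psi N))); auto.
  unfold Rdiv. rewrite Rmult_assoc, Rinv_l by lra. lra.
Qed.

Lemma sumR_re_Cmult w g l :
  sumR l (fun n => Re (Cmult w (g n))) = Re (Cmult w (fold_right Cplus (RtoC 0) (map g l))).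
Proof.
  unfold sumR; induction l as [|a l IH]; cbn [fold_right map]; [unfold Re; simpl; ring |].
  rewrite IH. destruct w, (g a), (fold_right _ _ _). unfold Re; simpl; ring.
Qed.

Lemma avgR_re_Cmult Psi w g N : Folner Psi ->
  avgR Psi (fun n => Re (Cmult w (g n))) N = Re (Cmult w (avgC Psi g N)).
Proof.
  intros HF. pose proof (Folner_length_pos Psi N HF).
  unfold avgR, avgC. fold (sumR (Psi N) (fun n => Re (Cmult w (g n)))). rewrite sumR_re_Cmult.
  destruct w, (fold_right _ _ _). unfold Cdiv, Cinv, Cmult, RtoC, Re; simpl. field. lra.
Qed.

Definition sqmod (v : nat -> C) (n : nat) : R := Cmod (v n) ^ 2.

Lemma sqmod_nonneg v n : 0 <= sqmod v n.
Proof. apply pow2_ge_0. Qed.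

Definition sqnorm (Psi : seq_sets) (v : nat -> C) : R := real (sqnorm_limsup Psi v).

Lemma normPhi_sqnorm Psi v : normPhi Psi v = sqrt (sqnorm Psi v).
Proof. reflexivity. Qed.

Definition ev_sqavg_le (Psi : seq_sets) (v : nat -> C) (c : R) : Prop :=
  forall eps, 0 < eps -> eventually (fun N => avgR Psi (sqmod v) N <= c + eps).

Lemma sqnorm_nonneg Psi v : 0 <= sqnorm Psi v.
Proof.
  unfold sqnorm, sqnorm_limsup, LimSup_seq. change (fun n => Cmod (v n) ^ 2) with (sqmod v).
  destruct (ex_LimSup_seq _) as [l Hl]; simpl.
  destruct l as [l| |]; simpl; try lra.
  destruct (Rle_or_lt 0 l) as [|Hl0]; auto.
  assert (Hp : 0 < - l / 2) by lra.
  destruct (Hl (mkposreal _ Hp)) as [_ [M HM]].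
  specialize (HM M (Nat.le_refl _)). cbn [pos] in HM.
  pose proof (avgR_nonneg Psi (sqmod v) M (sqmod_nonneg v)). lra.
Qed.

Lemma L2_ev_sqavg_le Psi v : L2 Psi v -> ev_sqavg_le Psi v (sqnorm Psi v).
Proof.
  unfold L2, sqnorm, sqnorm_limsup, LimSup_seq. change (fun n => Cmod (v n) ^ 2) with (sqmod v).
  destruct (ex_LimSup_seq _) as [l Hl]; simpl. intros HL eps Heps.
  destruct l as [l| |]; simpl in HL |- *; try contradiction.
  - destruct (Hl (mkposreal _ Heps)) as [_ [M HM]]. exists M. intros N HN.
    left; apply HM; auto.
  - destruct (Hl 0) as [M HM]. exists M. intros N HN.
    pose proof (HM N HN). lra.
Qed.

Lemma ev_sqavg_le_L2 Psi v c : ev_sqavg_le Psi v c -> L2 Psi v /\ sqnorm Psi v <= c.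
Proof.
  unfold L2, sqnorm, sqnorm_limsup, LimSup_seq. change (fun n => Cmod (v n) ^ 2) with (sqmod v).
  destruct (ex_LimSup_seq _) as [l Hl]; simpl. intros HE.
  destruct l as [l| |]; simpl.
  - split; auto. destruct (Rle_or_lt l c) as [|Hlt]; auto.
    assert (Hp : 0 < (l - c) / 2) by lra.
    destruct (HE _ Hp) as [M HM]. destruct (proj1 (Hl (mkposreal _ Hp)) M) as [n [Hn Hn2]].
    specialize (HM n Hn). simpl in Hn2. lra.
  - destruct (HE 1 Rlt_0_1) as [M HM]. destruct (Hl (c + 1) M) as [n [Hn Hn2]].
    specialize (HM n Hn). lra.
  - destruct (Hl 0) as [M HM]. specialize (HM M (Nat.le_refl _)).
    pose proof (avgR_nonneg Psi (sqmod v) M (sqmod_nonneg v)). lra.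
Qed.

Lemma ev_sqavg_le_weaken Psi v c c' : c <= c' -> ev_sqavg_le Psi v c -> ev_sqavg_le Psi v c'.
Proof.
  intros Hc H eps Heps. destruct (H eps Heps) as [M HM].
  exists M. intros N HN. specialize (HM N HN). lra.
Qed.

Lemma ev_sqavg_le_comb Psi x a b ca cb al be :
  ev_sqavg_le Psi a ca -> ev_sqavg_le Psi b cb -> 0 <= al -> 0 <= be ->
  (forall n, sqmod x n <= al * sqmod a n + be * sqmod b n) ->
  ev_sqavg_le Psi x (al * ca + be * cb).
Proof.
  intros Ha Hb Hal Hbe Hx eps Heps.
  assert (Hp : 0 < eps / (al + be + 1)) by (apply Rdiv_lt_0_compat; lra).
  destruct (Ha _ Hp) as [M1 HM1]. destruct (Hb _ Hp) as [M2 HM2].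
  exists (Nat.max M1 M2). intros N HN.
  eapply Rle_trans; [apply avgR_le; intros n _; apply Hx |].
  rewrite avgR_plus, !avgR_scal.
  specialize (HM1 N ltac:(lia)). specialize (HM2 N ltac:(lia)).
  set (e := eps / (al + be + 1)) in *.
  assert (e * (al + be + 1) = eps) by (unfold e; field; lra).
  nra.
Qed.

Lemma ev_sqavg_le_ev_subseq Psi' Psi v c :
  ev_subseq Psi' Psi -> ev_sqavg_le Psi v c -> ev_sqavg_le Psi' v c.
Proof.
  intros [th [N0 [Hth HE]]] H eps Heps. destruct (H eps Heps) as [M HM].
  exists (Nat.max M N0). intros N HN. unfold avgR. rewrite HE by lia.
  apply HM. pose proof (increasing_ge_id th Hth N). lia.
Qed.

Lemma L2_ev_subseq Psi' Psi v :
  ev_subseq Psi' Psi -> L2 Psi v -> L2 Psi' v /\ sqnorm Psi' v <= sqnorm Psi v.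
Proof.
  intros Hsub HL. apply ev_sqavg_le_L2, (ev_sqavg_le_ev_subseq _ Psi); auto.
  apply L2_ev_sqavg_le; auto.
Qed.

Lemma L2_subseq Psi s v : increasing s -> L2 Psi v -> L2 (subseq Psi s) v.
Proof. intros Hs Hv. apply (L2_ev_subseq _ Psi); auto. apply ev_subseq_subseq; auto. Qed.

Lemma L2_comb Psi x a b al be : L2 Psi a -> L2 Psi b -> 0 <= al -> 0 <= be ->
  (forall n, sqmod x n <= al * sqmod a n + be * sqmod b n) ->
  L2 Psi x /\ sqnorm Psi x <= al * sqnorm Psi a + be * sqnorm Psi b.
Proof.
  intros Ha Hb Hal Hbe Hx. apply ev_sqavg_le_L2.
  apply ev_sqavg_le_comb with a b; auto; apply L2_ev_sqavg_le; auto.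
Qed.

Lemma L2_dominated Psi x y : L2 Psi y -> (forall n, sqmod x n <= sqmod y n) ->
  L2 Psi x /\ sqnorm Psi x <= sqnorm Psi y.
Proof.
  intros Hy Hx. destruct (L2_comb Psi x y y 1 0 Hy Hy) as [HL Hle]; try lra.
  - intro n. specialize (Hx n). lra.
  - split; auto. lra.
Qed.

Lemma L2_Cminus Psi a b : L2 Psi a -> L2 Psi b -> L2 Psi (fun n => Cminus (a n) (b n)).
Proof.
  intros Ha Hb. apply (L2_comb Psi _ a b 2 2); auto; try lra.
  intro n. unfold sqmod. rewrite !Cmod2_alt. destruct (a n) as [a1 a2], (b n) as [b1 b2]. simpl.
  pose proof (pow2_ge_0 (a1 + b1)). pose proof (pow2_ge_0 (a2 + b2)). nra.
Qed.

Lemma L2_of_L2_Cminus Psi a b : L2 Psi a -> L2 Psi (fun n => Cminus (a n) (b n)) -> L2 Psi b.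
Proof.
  intros Ha Hab. apply (L2_dominated Psi b (fun n => Cminus (a n) (Cminus (a n) (b n))));
    [apply L2_Cminus; auto |].
  intro n. unfold sqmod. right. f_equal. f_equal. destruct (a n), (b n).
  unfold Cminus, Cplus, Copp; simpl. f_equal; ring.
Qed.

Lemma ev_sqavg_le_Cminus_sym Psi a b c :
  ev_sqavg_le Psi (fun n => Cminus (a n) (b n)) c ->
  ev_sqavg_le Psi (fun n => Cminus (b n) (a n)) c.
Proof.
  intros H eps Heps. generalize (H eps Heps). apply filter_imp. intros N HN.
  erewrite avgR_ext; [exact HN |]. intro n.
  unfold sqmod. rewrite !Cmod2_alt. destruct (a n), (b n). unfold Re, Im; simpl. ring.
Qed.

Lemma clamp_sqmod_le y z lo hi : Im y = 0 -> lo <= Re y <= hi ->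
  Cmod (Cminus y (RtoC (Rmax lo (Rmin hi (Re z))))) ^ 2 <= Cmod (Cminus y z) ^ 2.
Proof.
  rewrite !Cmod2_alt. destruct y as [y1 y2], z as [z1 z2]. unfold Re, Im, RtoC; simpl.
  intros -> Hy. unfold Rmax, Rmin. repeat destruct Rle_dec; nra.
Qed.

Lemma sqrt_le_iff x d : 0 <= x -> 0 <= d -> sqrt x <= d <-> x <= d ^ 2.
Proof.
  intros Hx Hd. split; intros H.
  - rewrite <- (pow2_sqrt x) by auto. pose proof (sqrt_pos x). nra.
  - rewrite <- (sqrt_pow2 d) by auto. apply sqrt_le_1_alt; auto.
Qed.

Lemma sqrt_lt_iff x d : 0 <= x -> 0 <= d -> sqrt x < d <-> x < d ^ 2.
Proof.
  intros Hx Hd. split; intros H.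
  - rewrite <- (pow2_sqrt x) by auto. pose proof (sqrt_pos x). nra.
  - rewrite <- (sqrt_pow2 d) by auto. apply sqrt_lt_1_alt; auto.
Qed.

(** * Infima and diagonal subsequences *)

Lemma exists_inf_nonneg (E : R -> Prop) : (exists x, E x) -> (forall x, E x -> 0 <= x) ->
  exists m, 0 <= m /\ (forall x, E x -> m <= x) /\
    (forall eps, 0 < eps -> exists x, E x /\ x < m + eps).
Proof.
  intros [x0 Hx0] Hpos.
  destruct (completeness (fun y => E (- y))) as [s [Hub Hleast]].
  - exists 0. intros y Hy. specialize (Hpos _ Hy). lra.
  - exists (- x0). rewrite Ropp_involutive. auto.
  - exists (- s). split; [| split].
    + assert (s <= 0); [| lra]. apply Hleast. intros y Hy. specialize (Hpos _ Hy). lra.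
    + intros x Hx. assert (- x <= s); [apply Hub; rewrite Ropp_involutive; auto | lra].
    + intros eps Heps. apply NNPP. intros Hn.
      assert (s <= s - eps); [| lra]. apply Hleast. intros y Hy.
      apply Rnot_lt_le. intros Hlt. apply Hn. exists (- y). split; auto. lra.
Qed.

Lemma exists_tight_upper_bound (x : nat -> R) : (exists c, forall n, x n <= c) ->
  exists hi, (forall n, x n <= hi) /\ forall c, (forall n, x n <= c) -> hi <= c.
Proof.
  intros [c Hc]. destruct (completeness (fun y => exists n, y = x n)) as [hi [Hub Hleast]].
  - exists c. intros y [n ->]. auto.
  - exists (x 0%nat), 0%nat. auto.
  - exists hi. split; [intro n; apply Hub; exists n; auto |].
    intros c' Hc'. apply Hleast. intros y [n ->]. auto.
Qed.

Lemma ev_inv_INR_S_le c eps : 0 < eps -> eventually (fun k => c * / INR (S k) <= eps).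
Proof.
  intros Heps. destruct (INR_archimed eps (Rabs c) Heps) as [M HM].
  exists M. intros k Hk. apply le_INR in Hk. rewrite S_INR.
  assert (Hk1 : 0 < INR k + 1) by (pose proof (pos_INR k); lra).
  apply Rmult_le_reg_r with (INR k + 1); auto. rewrite Rmult_assoc, Rinv_l by lra.
  pose proof (Rle_abs c). nra.
Qed.

Lemma inv_INR_S_pos k : 0 < / INR (S k).
Proof. apply Rinv_0_lt_compat, lt_0_INR; lia. Qed.

Lemma inv_INR_S_anti j k : (j <= k)%nat -> / INR (S k) <= / INR (S j).
Proof. intros Hjk. apply Rinv_le_contravar; [apply lt_0_INR; lia | apply le_INR; lia]. Qed.

Lemma inv_INR_S_le_1 k : / INR (S k) <= 1.
Proof. rewrite <- Rinv_1. apply (inv_INR_S_anti 0 k). lia. Qed.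

Section Diagonal.

Variable next : (nat -> nat) -> nat -> nat -> nat.
Hypothesis next_increasing : forall p k, increasing (next p k).

Fixpoint stage (k : nat) : nat -> nat :=
  match k with
  | 0 => fun n => n
  | S k' => fun n => stage k' (next (stage k') k' n)
  end.

Definition diagonal (n : nat) : nat := stage n n.

Fixpoint stage_tail (k j : nat) : nat -> nat :=
  match j with
  | 0 => fun n => n
  | S j' => fun n => stage_tail k j' (next (stage (k + j')) (k + j') n)
  end.

Lemma stage_increasing k : increasing (stage k).
Proof.
  induction k; [apply increasing_id | exact (increasing_comp _ _ IHk (next_increasing _ _))].
Qed.

Lemma stage_tail_increasing k j : increasing (stage_tail k j).
Proof.
  induction j; [apply increasing_id | exact (increasing_comp _ _ IHj (next_increasing _ _))].
Qed.

Lemma stage_add k j n : stage (k + j) n = stage k (stage_tail k j n).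
Proof.
  revert n. induction j; intro n; [now rewrite Nat.add_0_r |].
  rewrite Nat.add_succ_r. simpl. apply IHj.
Qed.

Lemma diagonal_increasing : increasing diagonal.
Proof.
  intro n. unfold diagonal. simpl. apply increasing_lt; [apply stage_increasing |].
  pose proof (increasing_ge_id _ (next_increasing (stage n) n) (S n)). lia.
Qed.

Lemma diagonal_ev_stage k :
  exists th, increasing th /\ forall N, (k <= N)%nat -> diagonal N = stage k (th N).
Proof.
  exists (fun N => stage_tail k (N - k) N). split.
  - intro N. destruct (Nat.lt_ge_cases N k).
    + replace (N - k)%nat with 0%nat by lia. replace (S N - k)%nat with 0%nat by lia. simpl. lia.
    + replace (S N - k)%nat with (S (N - k)) by lia. simpl.
      apply increasing_lt; [apply stage_tail_increasing |].
      pose proof (increasing_ge_id _ (next_increasing (stage (k + (N - k))) (k + (N - k))) (S N)).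
      lia.
  - intros N HN. unfold diagonal. rewrite <- stage_add. f_equal; lia.
Qed.

End Diagonal.

(** * Gluing along a sparse subsequence *)

Lemma eventually_forall_le (P : nat -> nat -> Prop) k :
  (forall m, (m <= k)%nat -> eventually (P m)) ->
  eventually (fun N => forall m, (m <= k)%nat -> P m N).
Proof.
  induction k as [|k IH]; intros H.
  - apply (filter_imp (P 0%nat)); [| apply H; lia]. intros N HN m Hm.
    replace m with 0%nat by lia. auto.
  - apply (filter_imp (fun N => (forall m, (m <= k)%nat -> P m N) /\ P (S k) N)).
    + intros N [HN1 HN2] m Hm. destruct (Nat.eq_dec m (S k)) as [-> | Hne]; auto. apply HN1; lia.
    + apply filter_and; [apply IH; intros; apply H; lia | apply H; lia].
Qed.

Section Gluing.

Variable Psi : seq_sets.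
Hypothesis Psi_Folner : Folner Psi.
Variables (g T : nat -> nat -> C) (b : nat -> nat -> R) (e : nat -> R).
Hypothesis e_pos : forall k, 0 < e k.
Hypothesis g_close : forall k m, (m <= k)%nat ->
  ev_sqavg_le Psi (fun n => Cminus (T m n) (g k n)) (b k m).

(* Bounds the error at [n] when an earlier [g i], [i < k], is used in place of [g k]. *)
Definition prev_cost (k n : nat) : R :=
  sumR (seq 0 k) (fun i => sumR (seq 0 (S k)) (fun m => sqmod (fun n => Cminus (T m n) (g i n)) n)).

Lemma prev_cost_nonneg k n : 0 <= prev_cost k n.
Proof. apply sumR_nonneg. intro i. apply sumR_nonneg. intro m. apply sqmod_nonneg. Qed.

Lemma prev_cost_ge k i m n : (i < k)%nat -> (m <= k)%nat ->
  sqmod (fun n => Cminus (T m n) (g i n)) n <= prev_cost k n.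
Proof.
  intros Hi Hm. eapply Rle_trans.
  - apply (sumR_ge_term (seq 0 (S k)) (fun m => sqmod (fun n => Cminus (T m n) (g i n)) n));
      [intro; apply sqmod_nonneg | apply in_seq; lia].
  - apply (sumR_ge_term (seq 0 k)
             (fun i => sumR (seq 0 (S k)) (fun m => sqmod (fun n => Cminus (T m n) (g i n)) n)));
      [intro; apply sumR_nonneg; intro; apply sqmod_nonneg | apply in_seq; lia].
Qed.

Definition good_block (k lo : nat) (seen : list nat) (N : nat) : Prop :=
  (lo <= N)%nat /\
  (forall m, (m <= k)%nat -> avgR Psi (sqmod (fun n => Cminus (T m n) (g k n))) N <= b k m + e k) /\
  sumR seen (prev_cost k) <= e k * INR (length (Psi N)).

Lemma exists_good_block k lo seen : exists N, good_block k lo seen N.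
Proof.
  assert (Hev : eventually (good_block k lo seen)).
  { apply (filter_imp (fun N => (lo <= N)%nat /\ ((forall m, (m <= k)%nat ->
             avgR Psi (sqmod (fun n => Cminus (T m n) (g k n))) N <= b k m + e k) /\
             sumR seen (prev_cost k) / e k <= INR (length (Psi N))))).
    - intros N (H1 & H2 & H3). pose proof (e_pos k). repeat split; auto.
      replace (sumR seen (prev_cost k)) with (e k * (sumR seen (prev_cost k) / e k))
        by (field; lra).
      apply Rmult_le_compat_l; lra.
    - apply filter_and; [exists lo; auto | apply filter_and].
      + apply eventually_forall_le. intros m Hm. apply g_close; auto.
      + apply Folner_length_unbounded; auto. }
  destruct Hev as [M HM]. exists M. apply HM. lia.
Qed.

Definition pick_block (k lo : nat) (seen : list nat) : nat :=
  epsilon (inhabits 0%nat) (good_block k lo seen).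

Lemma pick_block_good k lo seen : good_block k lo seen (pick_block k lo seen).
Proof. unfold pick_block. apply epsilon_spec, exists_good_block. Qed.

(* Block [k] is [Psi (block k)]; [seen k] lists the points of the earlier blocks. *)
Fixpoint blocks (k : nat) : nat * list nat :=
  match k with
  | 0 => (pick_block 0 0 nil, nil)
  | S k' =>
      let seen := snd (blocks k') ++ Psi (fst (blocks k')) in
      (pick_block (S k') (S (fst (blocks k'))) seen, seen)
  end.

Definition block (k : nat) : nat := fst (blocks k).
Definition seen (k : nat) : list nat := snd (blocks k).

Lemma block_good k : exists lo, good_block k lo (seen k) (block k).
Proof. destruct k; eexists; apply pick_block_good. Qed.

Lemma block_increasing : increasing block.
Proof. intro k. apply (pick_block_good (S k) (S (block k)) (seen (S k))). Qed.

Lemma seen_incl k i n : (i < k)%nat -> In n (Psi (block i)) -> In n (seen k).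
Proof.
  induction k as [|k IH]; intros Hi Hn; [lia |].
  change (seen (S k)) with (seen k ++ Psi (block k)). apply in_or_app.
  destruct (Nat.eq_dec i k) as [-> | Hne]; [right | left; apply IH]; auto; lia.
Qed.

Lemma seen_first k n : In n (seen k) ->
  exists i, (i < k)%nat /\ In n (Psi (block i)) /\ ~ In n (seen i).
Proof.
  induction k as [|k IH]; intros Hn; [destruct Hn |].
  change (seen (S k)) with (seen k ++ Psi (block k)) in Hn.
  destruct (classic (In n (seen k))) as [Hs | Hs].
  - destruct (IH Hs) as (i & Hi & H). exists i. split; auto; lia.
  - apply in_app_or in Hn as [Hn | Hn]; [contradiction |]. exists k. auto.
Qed.

Definition first_block (n : nat) : nat :=
  epsilon (inhabits 0%nat) (fun k => In n (Psi (block k)) /\ ~ In n (seen k)).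

Lemma first_block_eq k n : In n (Psi (block k)) -> ~ In n (seen k) -> first_block n = k.
Proof.
  intros Hin Hnew.
  destruct (epsilon_spec (inhabits 0%nat) (fun k => In n (Psi (block k)) /\ ~ In n (seen k)))
    as [Hin' Hnew']; [exists k; auto |].
  fold (first_block n) in Hin', Hnew'.
  destruct (Nat.lt_total (first_block n) k) as [Hlt | [Heq | Hgt]]; auto; exfalso.
  - exact (Hnew (seen_incl k _ n Hlt Hin')).
  - exact (Hnew' (seen_incl _ k n Hgt Hin)).
Qed.

Definition glued (n : nat) : C := g (first_block n) n.

Lemma glued_sqmod_le k m n : (m <= k)%nat -> In n (Psi (block k)) ->
  sqmod (fun n => Cminus (T m n) (glued n)) n <=
  sqmod (fun n => Cminus (T m n) (g k n)) n + (if memb n (seen k) then prev_cost k n else 0).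
Proof.
  intros Hm Hn. pose proof (sqmod_nonneg (fun n => Cminus (T m n) (g k n)) n).
  destruct (memb n (seen k)) eqn:E.
  - apply memb_In in E. destruct (seen_first k n E) as (i & Hik & Hi1 & Hi2).
    pose proof (prev_cost_ge k i m n Hik Hm).
    unfold sqmod, glued in *. rewrite (first_block_eq i n Hi1 Hi2). lra.
  - assert (Hnew : ~ In n (seen k)) by (rewrite <- memb_In; congruence).
    unfold sqmod, glued. rewrite (first_block_eq k n Hn Hnew). lra.
Qed.

Lemma glued_avg_le k m : (m <= k)%nat ->
  avgR Psi (sqmod (fun n => Cminus (T m n) (glued n))) (block k) <= b k m + 2 * e k.
Proof.
  intros Hm. destruct (block_good k) as [lo (_ & Hclose & Hcost)].
  eapply Rle_trans; [apply avgR_le; intros n Hn; apply (glued_sqmod_le k m n Hm Hn) |].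
  rewrite avgR_plus. pose proof (Hclose m Hm).
  pose proof (avgR_indicator_le Psi (block k) (seen k) (prev_cost k) (e k) Psi_Folner
                (prev_cost_nonneg k) Hcost).
  lra.
Qed.

End Gluing.

Lemma diagonal_gluing Psi (g T : nat -> nat -> C) (b : nat -> nat -> R) (e : nat -> R) :
  Folner Psi -> (forall k, 0 < e k) ->
  (forall k m, (m <= k)%nat -> ev_sqavg_le Psi (fun n => Cminus (T m n) (g k n)) (b k m)) ->
  exists s h, increasing s /\ forall k m, (m <= k)%nat ->
    avgR Psi (sqmod (fun n => Cminus (T m n) (h n))) (s k) <= b k m + 2 * e k.
Proof.
  intros HF He Hclose. exists (block Psi g T b e), (glued Psi g T b e).
  split; [apply block_increasing | intros; apply glued_avg_le]; auto.
Qed.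

(** * Projection families *)

Section ProjectionFamily.

Variable U : seq_sets -> (nat -> C) -> Prop.
Hypothesis PF : projection_family U.

Lemma U_L2 Psi g : Folner Psi -> U Psi g -> L2 Psi g.
Proof. intros HF; pose proof (proj1 PF Psi HF) as (?&?&?&?&?&?&?&?&?); eauto. Qed.

Lemma U_plus Psi a b : Folner Psi -> U Psi a -> U Psi b -> U Psi (fun n => Cplus (a n) (b n)).
Proof. intros HF; pose proof (proj1 PF Psi HF) as (?&?&?&?&?&?&?&?&?); eauto. Qed.

Lemma U_scal Psi c a : Folner Psi -> U Psi a -> U Psi (fun n => Cmult c (a n)).
Proof. intros HF; pose proof (proj1 PF Psi HF) as (?&?&?&?&?&?&?&?&?); eauto. Qed.

Lemma U_const Psi c : Folner Psi -> U Psi (fun _ => c).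
Proof. intros HF; pose proof (proj1 PF Psi HF) as (?&?&?&?&?&?&?&?&?); eauto. Qed.

Lemma U_conj Psi a : Folner Psi -> U Psi a -> U Psi (fun n => Cconj (a n)).
Proof. intros HF; pose proof (proj1 PF Psi HF) as (?&?&?&?&?&?&?&?&?); eauto. Qed.

Lemma U_max Psi a b : Folner Psi -> U Psi a -> U Psi b -> real_valued a -> real_valued b ->
  U Psi (fun n => RtoC (Rmax (Re (a n)) (Re (b n)))).
Proof. intros HF; pose proof (proj1 PF Psi HF) as (?&?&?&?&?&?&?&?&?); eauto. Qed.

Lemma U_closed Psi g : Folner Psi -> L2 Psi g ->
  (forall eps, 0 < eps -> exists u, U Psi u /\ normPhi Psi (fun n => Cminus (g n) (u n)) < eps) ->
  U Psi g.
Proof. intros HF; pose proof (proj1 PF Psi HF) as (?&?&?&?&?&?&?&?&?); eauto. Qed.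

Lemma U_ev_subseq Psi' Psi g : Folner Psi -> Folner Psi' -> ev_subseq Psi' Psi ->
  U Psi g -> U Psi' g.
Proof.
  intros HF HF' [th [N0 [Hth HE]]]. apply (proj2 PF Psi Psi' HF HF').
  exists th, N0. split; auto. intros N HN n. rewrite HE; tauto.
Qed.

Lemma U_subseq Psi s g : Folner Psi -> increasing s -> U Psi g -> U (subseq Psi s) g.
Proof.
  intros HF Hs. apply U_ev_subseq; [| apply Folner_subseq | apply ev_subseq_subseq]; auto.
Qed.

Lemma U_re Psi h : Folner Psi -> U Psi h -> U Psi (fun n => RtoC (Re (h n))).
Proof.
  intros HF Hh.
  replace (fun n => RtoC (Re (h n))) with (fun n => Cmult (RtoC (/ 2)) (Cplus (h n) (Cconj (h n)))).
  - apply U_scal, U_plus, U_conj; auto.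
  - apply functional_extensionality. intro n. destruct (h n) as [x y].
    unfold RtoC, Cmult, Cplus, Cconj, Re. simpl. f_equal; field.
Qed.

Lemma U_min Psi a b : Folner Psi -> U Psi a -> U Psi b -> real_valued a -> real_valued b ->
  U Psi (fun n => RtoC (Rmin (Re (a n)) (Re (b n)))).
Proof.
  intros HF Ha Hb Hra Hrb.
  assert (Hneg : forall v, U Psi v -> real_valued v ->
                   U Psi (fun n => Cmult (RtoC (-1)) (v n)) /\
                   real_valued (fun n => Cmult (RtoC (-1)) (v n))).
  { intros v Hv Hrv. split; [apply U_scal; auto |].
    intro n. specialize (Hrv n). destruct (v n). unfold Im, Cmult, RtoC in *; simpl in *. lra. }
  destruct (Hneg a Ha Hra) as [Ha' Hra']. destruct (Hneg b Hb Hrb) as [Hb' Hrb'].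
  pose proof (U_scal Psi (RtoC (-1)) _ HF (U_max Psi _ _ HF Ha' Hb' Hra' Hrb')) as Hmin.
  match type of Hmin with
  | U Psi ?m => replace (fun n => RtoC (Rmin (Re (a n)) (Re (b n)))) with m; auto
  end.
  apply functional_extensionality. intro n. destruct (a n), (b n).
  unfold Re, Cmult, RtoC; simpl. f_equal; [| ring].
  unfold Rmin, Rmax. repeat destruct Rle_dec; lra.
Qed.

Lemma U_clamp Psi h lo hi : Folner Psi -> U Psi h ->
  U Psi (fun n => RtoC (Rmax lo (Rmin hi (Re (h n))))).
Proof.
  intros HF Hh.
  pose proof (U_min Psi (fun _ => RtoC hi) _ HF (U_const Psi _ HF) (U_re Psi h HF Hh)
                (fun _ => eq_refl) (fun _ => eq_refl)) as Hmin.
  exact (U_max Psi (fun _ => RtoC lo) _ HF (U_const Psi _ HF) Hmin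
           (fun _ => eq_refl) (fun _ => eq_refl)).
Qed.

Lemma U_of_ev_sqavg_limit Psi h (g : nat -> nat -> C) (c : nat -> R) :
  Folner Psi -> L2 Psi h -> (forall j, U Psi (g j)) ->
  (forall j, ev_sqavg_le Psi (fun n => Cminus (g j n) (h n)) (c j)) ->
  (forall eps, 0 < eps -> exists j, c j < eps) -> U Psi h.
Proof.
  intros HF Hh Hg Hclose Hsmall. apply U_closed; auto. intros eps Heps.
  destruct (Hsmall (eps ^ 2)) as [j Hj]; [nra |]. exists (g j). split; auto.
  destruct (ev_sqavg_le_L2 _ _ _ (ev_sqavg_le_Cminus_sym _ _ _ _ (Hclose j))) as [_ Hc].
  rewrite normPhi_sqnorm, sqrt_lt_iff; [lra | apply sqnorm_nonneg | lra].
Qed.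

Variable f : nat -> C.

Definition dist_ge_subseqs (Psi : seq_sets) (d : R) : Prop :=
  forall r g, increasing r -> U (subseq Psi r) g ->
    d <= normPhi (subseq Psi r) (fun n => Cminus (f n) (g n)).

Definition dist_approx (Psi : seq_sets) (d : R) : Prop :=
  forall eps, 0 < eps ->
    exists g, U Psi g /\ normPhi Psi (fun n => Cminus (f n) (g n)) < d + eps.

Lemma L2_dist Psi g : Folner Psi -> L2 Psi f -> U Psi g -> L2 Psi (fun n => Cminus (f n) (g n)).
Proof. intros HF Hf Hg. apply L2_Cminus; auto. eapply U_L2; eauto. Qed.

Lemma dist_ev_subseq Psi' Psi g : Folner Psi -> Folner Psi' -> ev_subseq Psi' Psi ->
  L2 Psi f -> U Psi g ->
  U Psi' g /\
  normPhi Psi' (fun n => Cminus (f n) (g n)) <= normPhi Psi (fun n => Cminus (f n) (g n)).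
Proof.
  intros HF HF' Hsub Hf Hg. split; [apply (U_ev_subseq Psi' Psi); auto |].
  rewrite !normPhi_sqnorm. apply sqrt_le_1_alt, (L2_ev_subseq Psi' Psi); auto. apply L2_dist; auto.
Qed.

Lemma dist_ge_subseqs_subseq Psi d s :
  dist_ge_subseqs Psi d -> increasing s -> dist_ge_subseqs (subseq Psi s) d.
Proof. intros H Hs r g Hr Hg. exact (H (fun n => s (r n)) g (increasing_comp s r Hs Hr) Hg). Qed.

Lemma dist_ge_subseqs_sqnorm Psi d r g : dist_ge_subseqs Psi d -> 0 <= d ->
  increasing r -> U (subseq Psi r) g ->
  d ^ 2 <= sqnorm (subseq Psi r) (fun n => Cminus (f n) (g n)).
Proof.
  intros H Hd Hr Hg. specialize (H r g Hr Hg). rewrite normPhi_sqnorm in H.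
  apply Rnot_lt_le. intros Hlt. apply sqrt_lt_iff in Hlt; auto using sqnorm_nonneg. lra.
Qed.

Lemma dist_ge_subseqs_ev_sqavg Psi d u : Folner Psi -> dist_ge_subseqs Psi d -> 0 <= d ->
  U Psi u -> forall eps, 0 < eps ->
  eventually (fun N => d ^ 2 - eps <= avgR Psi (sqmod (fun n => Cminus (f n) (u n))) N).
Proof.
  intros HF HS Hd Hu eps Heps. apply eventually_of_subseqs. intros r Hr Hlow.
  assert (HE : ev_sqavg_le (subseq Psi r) (fun n => Cminus (f n) (u n)) (d ^ 2 - eps)).
  { intros e He. exists 0%nat. intros N _. specialize (Hlow N).
    change (avgR (subseq Psi r) ?g N) with (avgR Psi g (r N)). lra. }
  apply ev_sqavg_le_L2 in HE as [_ Hle].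
  pose proof (dist_ge_subseqs_sqnorm Psi d r u HS Hd Hr (U_subseq Psi r u HF Hr Hu)). lra.
Qed.

(* Parallelogram law at the midpoint [(u + v) / 2 ∈ U], whose distance to [f] is at least [d]. *)
Lemma near_minimizers_ev_sqavg_le Psi d u v a b :
  Folner Psi -> dist_ge_subseqs Psi d -> 0 <= d -> U Psi u -> U Psi v ->
  ev_sqavg_le Psi (fun n => Cminus (f n) (u n)) a ->
  ev_sqavg_le Psi (fun n => Cminus (f n) (v n)) b ->
  ev_sqavg_le Psi (fun n => Cminus (u n) (v n)) (2 * a + 2 * b - 4 * d ^ 2).
Proof.
  intros HF HS Hd Hu Hv Ha Hb eps Heps.
  set (m := fun n => Cmult (RtoC (/ 2)) (Cplus (u n) (v n))).
  assert (Hm : U Psi m) by (apply U_scal, U_plus; auto).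
  assert (He : 0 < eps / 8) by lra.
  assert (Hpar : forall n, sqmod (fun n => Cminus (u n) (v n)) n =
      2 * sqmod (fun n => Cminus (f n) (u n)) n + 2 * sqmod (fun n => Cminus (f n) (v n)) n
      + (-4) * sqmod (fun n => Cminus (f n) (m n)) n).
  { intro n. unfold sqmod, m. rewrite !Cmod2_alt.
    destruct (f n), (u n), (v n). unfold Re, Im, RtoC; simpl. field. }
  generalize (filter_and _ _ (Ha _ He)
               (filter_and _ _ (Hb _ He) (dist_ge_subseqs_ev_sqavg Psi d m HF HS Hd Hm _ He))).
  apply filter_imp. intros N (H1 & H2 & H3).
  rewrite (avgR_ext _ _ _ _ Hpar), !avgR_plus, !avgR_scal. lra.
Qed.

(* If the average of [Re (u (f-h)^* )] stayed above [eps] along a subsequence, moving [h] to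
   [h + t u] with [t] small would undercut the distance [d] there. *)
Lemma minimizer_re_inner_ev_lt Psi d h u :
  Folner Psi -> L2 Psi f -> dist_ge_subseqs Psi d -> 0 <= d -> U Psi h ->
  sqnorm Psi (fun n => Cminus (f n) (h n)) <= d ^ 2 -> U Psi u ->
  forall eps, 0 < eps ->
  eventually (fun N => avgR Psi (fun n => Re (Cmult (u n) (Cconj (Cminus (f n) (h n))))) N < eps).
Proof.
  intros HF Hf HS Hd Hh Hdh Hu eps Heps. apply eventually_of_subseqs. intros r Hr Hbig.
  set (v := fun n => Cminus (f n) (h n)) in *.
  set (re := fun n => Re (Cmult (u n) (Cconj (v n)))) in *.
  assert (Hv : ev_sqavg_le Psi v (d ^ 2)).
  { apply (ev_sqavg_le_weaken _ _ _ _ Hdh), L2_ev_sqavg_le, L2_dist; auto. }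
  assert (HLu := U_L2 Psi u HF Hu).
  pose proof (sqnorm_nonneg Psi u). set (su := sqnorm Psi u) in *.
  set (t := eps / (su + 1)).
  assert (Ht : 0 < t) by (apply Rdiv_lt_0_compat; lra).
  assert (Htsu : t * su < eps).
  { unfold t. apply Rmult_lt_reg_r with (su + 1); [lra |]. field_simplify; lra. }
  set (g := fun n => Cplus (h n) (Cmult (RtoC t) (u n))).
  assert (Hg : U (subseq Psi r) g) by (apply U_subseq, U_plus, U_scal; auto).
  assert (Hexp : forall n, sqmod (fun n => Cminus (f n) (g n)) n =
                           sqmod v n + (-2 * t) * re n + t ^ 2 * sqmod u n).
  { intro n. unfold sqmod, g, re, v. rewrite !Cmod2_alt.
    destruct (f n), (h n), (u n). unfold Re, Im, RtoC; simpl. ring. }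
  assert (HE : ev_sqavg_le (subseq Psi r) (fun n => Cminus (f n) (g n))
                 (d ^ 2 - 2 * t * eps + t ^ 2 * su)).
  { intros e He. set (e' := e / (1 + t ^ 2)).
    assert (He' : 0 < e') by (apply Rdiv_lt_0_compat; nra).
    assert (Hee : e' * (1 + t ^ 2) = e) by (unfold e'; field; nra).
    destruct (filter_and _ _ (Hv e' He') (L2_ev_sqavg_le _ _ HLu e' He')) as [M HM].
    exists M. intros N HN.
    change (avgR (subseq Psi r) ?G N) with (avgR Psi G (r N)).
    rewrite (avgR_ext _ _ _ _ Hexp), !avgR_plus, !avgR_scal.
    destruct (HM (r N)) as [H1 H2]; [pose proof (increasing_ge_id r Hr N); lia |].
    specialize (Hbig N). change (~ avgR Psi re (r N) < eps) in Hbig. fold su in H2. nra. }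
  apply ev_sqavg_le_L2 in HE as [_ Hle].
  pose proof (dist_ge_subseqs_sqnorm Psi d r g HS Hd Hr Hg). nra.
Qed.

Lemma minimizer_perp Psi d h :
  Folner Psi -> L2 Psi f -> dist_ge_subseqs Psi d -> 0 <= d -> U Psi h ->
  sqnorm Psi (fun n => Cminus (f n) (h n)) <= d ^ 2 ->
  in_perp U Psi (fun n => Cminus (f n) (h n)).
Proof.
  intros HF Hf HS Hd Hh Hdh. split; [apply L2_dist; auto |].
  intros u Hu.
  set (z := avgC Psi (fun n => Cmult (u n) (Cconj (Cminus (f n) (h n))))).
  assert (Hdir : forall w eps, 0 < eps -> eventually (fun N => Re (Cmult w (z N)) < eps)).
  { intros w eps Heps.
    generalize (minimizer_re_inner_ev_lt Psi d h _ HF Hf HS Hd Hh Hdh (U_scal Psi w u HF Hu)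
                  eps Heps).
    apply filter_imp. intros N HN. unfold z. rewrite <- avgR_re_Cmult by auto.
    erewrite avgR_ext; [exact HN |]. intro n. rewrite Cmult_assoc. reflexivity. }
  change (filterlim z eventually (locally (RtoC 0))).
  apply filterlim_locally. intros eps. pose proof (cond_pos eps) as Heps.
  generalize (filter_and _ _ (Hdir (RtoC 1) eps Heps) (filter_and _ _ (Hdir (RtoC (-1)) eps Heps)
    (filter_and _ _ (Hdir (0, 1) eps Heps) (Hdir (0, -1) eps Heps)))).
  apply filter_imp. intros N (H1 & H2 & H3 & H4).
  destruct (z N) as [a b]. unfold Re, RtoC, Cmult in H1, H2, H3, H4; simpl in H1, H2, H3, H4.
  split; [change (Rabs (a - 0) < eps) | change (Rabs (b - 0) < eps)];
    rewrite Rminus_0_r; apply Rabs_def1; lra.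
Qed.


Lemma subseq_dist_inf Psi : Folner Psi ->
  exists d, 0 <= d /\ dist_ge_subseqs Psi d /\
    forall eps, 0 < eps -> exists r g, increasing r /\ U (subseq Psi r) g /\
      normPhi (subseq Psi r) (fun n => Cminus (f n) (g n)) < d + eps.
Proof.
  intros HF.
  destruct (exists_inf_nonneg (fun x => exists r g, increasing r /\ U (subseq Psi r) g /\
              x = normPhi (subseq Psi r) (fun n => Cminus (f n) (g n)))) as (d & Hd & Hlow & Happ).
  - exists (normPhi (subseq Psi (fun n => n)) (fun n => Cminus (f n) (RtoC 0))),
      (fun n => n), (fun _ => RtoC 0).
    repeat split; [apply increasing_id | apply U_const, Folner_subseq; auto; apply increasing_id].
  - intros x (r & g & _ & _ & ->). apply sqrt_pos.
  - exists d. repeat split; auto.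
    + intros r g Hr Hg. apply Hlow. exists r, g. auto.
    + intros eps Heps. destruct (Happ eps Heps) as (x & (r & g & Hr & Hg & ->) & Hx).
      exists r, g. auto.
Qed.

(* The diagonal is eventually a subsequence of every stage, which can only raise the infimum
   over further subsequences and lower the distance to a fixed [g]. *)
Lemma diagonal_near_optimal Phi next k g c :
  Folner Phi -> L2 Phi f -> (forall p k, increasing (next p k)) ->
  U (subseq Phi (stage next (S k))) g ->
  dist_ge_subseqs (subseq Phi (stage next k))
    (normPhi (subseq Phi (stage next (S k))) (fun n => Cminus (f n) (g n)) - c) ->
  U (subseq Phi (diagonal next)) g /\
  dist_ge_subseqs (subseq Phi (diagonal next))
    (normPhi (subseq Phi (diagonal next)) (fun n => Cminus (f n) (g n)) - c).
Proof.
  intros HF Hf Hnext Hg Hopt.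
  pose proof (diagonal_increasing next Hnext) as Hdiag.
  assert (HFd : Folner (subseq Phi (diagonal next))) by (apply Folner_subseq; auto).
  destruct (diagonal_ev_stage next Hnext (S k)) as (th1 & Hth1 & Heq1).
  destruct (dist_ev_subseq (subseq Phi (diagonal next)) (subseq Phi (stage next (S k))) g)
    as [HgD Hle]; auto.
  { apply Folner_subseq; [| apply stage_increasing]; auto. }
  { exists th1, (S k). split; auto. intros N HN. unfold subseq. rewrite Heq1; auto. }
  { apply L2_subseq; [apply stage_increasing |]; auto. }
  split; auto. intros r g' Hr Hg'.
  destruct (diagonal_ev_stage next Hnext k) as (th & Hth & Heq).
  destruct (dist_ev_subseq (subseq (subseq Phi (stage next k)) (fun N => th (r N)))
              (subseq (subseq Phi (diagonal next)) r) g') as [Hg'k Hle']; auto.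
  { apply Folner_subseq; auto. }
  { apply Folner_subseq; [apply Folner_subseq; [| apply stage_increasing] | apply increasing_comp];
      auto. }
  { exists (fun N => N), k. split; [apply increasing_id |]. intros N HN. unfold subseq.
    rewrite Heq; auto. pose proof (increasing_ge_id r Hr N). lia. }
  { apply L2_subseq; [| apply L2_subseq]; auto. }
  specialize (Hopt _ g' (increasing_comp th r Hth Hr) Hg'k). lra.
Qed.

Lemma exists_dist_stable_subseq Phi : Folner Phi -> L2 Phi f ->
  exists phi d, increasing phi /\ 0 <= d /\
    dist_ge_subseqs (subseq Phi phi) d /\ dist_approx (subseq Phi phi) d.
Proof.
  intros HF Hf.
  destruct (choice (fun (pk : (nat -> nat) * nat) (qg : (nat -> nat) * (nat -> C)) =>
      increasing (fst qg) /\
      (increasing (fst pk) ->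
         U (subseq (subseq Phi (fst pk)) (fst qg)) (snd qg) /\
         dist_ge_subseqs (subseq Phi (fst pk))
           (normPhi (subseq (subseq Phi (fst pk)) (fst qg)) (fun n => Cminus (f n) (snd qg n))
            - / INR (S (snd pk))))))
    as [ch Hch].
  { intros [p k]. cbn [fst snd]. destruct (classic (increasing p)) as [Hp | Hp].
    - destruct (subseq_dist_inf (subseq Phi p)) as (d & _ & Hlow & Happ);
        [apply Folner_subseq; auto |].
      destruct (Happ _ (inv_INR_S_pos k)) as (q & g & Hq & Hg & Hlt).
      exists (q, g). cbn [fst snd]. repeat split; auto.
      intros r g' Hr Hg'. specialize (Hlow r g' Hr Hg'). lra.
    - exists ((fun n => n), (fun _ => RtoC 0)). cbn [fst snd].
      split; [apply increasing_id | tauto]. }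
  set (next := fun p k => fst (ch (p, k))).
  assert (Hnext : forall p k, increasing (next p k)) by (intros; apply Hch).
  set (Ps := subseq Phi (diagonal next)).
  assert (HFs : Folner Ps) by (apply Folner_subseq, diagonal_increasing; auto).
  destruct (subseq_dist_inf Ps HFs) as (d & Hd & HS & Happ).
  exists (diagonal next), d. repeat split; auto; [apply diagonal_increasing; auto |].
  intros eps Heps.
  destruct (ev_inv_INR_S_le 1 (eps / 2)) as [K HK]; [lra |]. specialize (HK K (le_n K)).
  destruct (Hch (stage next K, K)) as [_ HK']. cbn [fst snd] in HK'.
  destruct (diagonal_near_optimal Phi next K (snd (ch (stage next K, K))) (/ INR (S K)))
    as [HgK HoptK]; auto; try apply HK'; try apply stage_increasing; auto.
  destruct (Happ (eps / 2)) as (r & g & Hr & Hg & Hlt); [lra |].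
  specialize (HoptK r g Hr Hg). exists (snd (ch (stage next K, K))). split; auto.
  unfold Ps in *. lra.
Qed.

Lemma near_minimizer_seq Psi d : Folner Psi -> L2 Psi f -> 0 <= d -> dist_approx Psi d ->
  exists g : nat -> nat -> C, forall k, U Psi (g k) /\
    ev_sqavg_le Psi (fun n => Cminus (f n) (g k n)) ((d + / INR (S k)) ^ 2).
Proof.
  intros HF Hf Hd HA.
  destruct (choice (fun k g => U Psi g /\
                      normPhi Psi (fun n => Cminus (f n) (g n)) < d + / INR (S k)))
    as [g Hg]; [intro k; apply HA, inv_INR_S_pos |].
  exists g. intro k. destruct (Hg k) as [Hgk Hlt]. split; auto. pose proof (inv_INR_S_pos k).
  rewrite normPhi_sqnorm, sqrt_lt_iff in Hlt; [| apply sqnorm_nonneg | lra].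
  apply (ev_sqavg_le_weaken _ _ _ _ (Rlt_le _ _ Hlt)), L2_ev_sqavg_le, L2_dist; auto.
Qed.

Lemma exists_minimizer Psi d :
  Folner Psi -> L2 Psi f -> dist_ge_subseqs Psi d -> 0 <= d -> dist_approx Psi d ->
  exists s h, increasing s /\ U (subseq Psi s) h /\
    sqnorm (subseq Psi s) (fun n => Cminus (f n) (h n)) <= d ^ 2.
Proof.
  intros HF Hf HS Hd HA.
  destruct (near_minimizer_seq Psi d HF Hf Hd HA) as [g Hg].
  set (ee := fun k => / INR (S k)).
  set (a := fun k => (d + ee k) ^ 2).
  set (T := fun m => match m with 0 => f | S j => g j end).
  set (b := fun k m => match m with 0 => a k | S j => 4 * (a j - d ^ 2) end).
  destruct (diagonal_gluing Psi g T b ee HF inv_INR_S_pos) as (s & h & Hs & Hh).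
  { intros k [|j] Hjk; [apply Hg |].
    apply (ev_sqavg_le_weaken _ _ (2 * a j + 2 * a k - 4 * d ^ 2)).
    - pose proof (inv_INR_S_anti j k ltac:(lia)). pose proof (inv_INR_S_pos k).
      change (b k (S j)) with (4 * (a j - d ^ 2)). unfold a, ee. nra.
    - apply near_minimizers_ev_sqavg_le; auto; apply Hg. }
  set (Ps := subseq Psi s).
  assert (HFs : Folner Ps) by (apply Folner_subseq; auto).
  assert (Hfh : ev_sqavg_le Ps (fun n => Cminus (f n) (h n)) (d ^ 2)).
  { intros eps Heps. generalize (ev_inv_INR_S_le (2 * d + 3) eps Heps). apply filter_imp.
    intros k Hk. specialize (Hh k 0%nat (Nat.le_0_l k)).
    pose proof (inv_INR_S_pos k). pose proof (inv_INR_S_le_1 k).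
    change (T 0%nat) with f in Hh. change (b k 0%nat) with (a k) in Hh.
    change (avgR Ps ?G k) with (avgR Psi G (s k)). unfold a, ee in *. nra. }
  destruct (ev_sqavg_le_L2 _ _ _ Hfh) as [HLfh Hsq].
  exists s, h. repeat split; auto.
  apply (U_of_ev_sqavg_limit Ps h g (fun j => 4 * (a j - d ^ 2))); auto.
  - apply (L2_of_L2_Cminus Ps f); auto. apply L2_subseq; auto.
  - intro j. apply U_subseq, Hg; auto.
  - intros j eps Heps.
    generalize (filter_and _ _ (ev_inv_INR_S_le 2 eps Heps) (ex_intro _ (S j) (fun k Hk => Hk))).
    apply filter_imp. intros k [Hk Hjk]. specialize (Hh k (S j) Hjk).
    change (T (S j)) with (g j) in Hh. change (b k (S j)) with (4 * (a j - d ^ 2)) in Hh.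
    change (avgR Ps ?G k) with (avgR Psi G (s k)). unfold ee in *. lra.
  - intros eps Heps.
    destruct (ev_inv_INR_S_le (4 * (2 * d + 1)) (eps / 2)) as [j Hj]; [lra |].
    exists j. specialize (Hj j (le_n j)). pose proof (inv_INR_S_pos j).
    pose proof (inv_INR_S_le_1 j). unfold a, ee. nra.
Qed.

Lemma clamp_minimizer Psi d h : Folner Psi -> L2 Psi f -> U Psi h ->
  sqnorm Psi (fun n => Cminus (f n) (h n)) <= d ^ 2 ->
  exists h', U Psi h' /\ sqnorm Psi (fun n => Cminus (f n) (h' n)) <= d ^ 2 /\
    forall a b, (forall n, Im (f n) = 0 /\ a <= Re (f n) <= b) ->
      forall n, Im (h' n) = 0 /\ a <= Re (h' n) <= b.
Proof.
  intros HF Hf Hh Hdh.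
  destruct (classic (exists a b, forall n, Im (f n) = 0 /\ a <= Re (f n) <= b))
    as [(a0 & b0 & Hab0) | Hunbounded].
  2: { exists h. do 2 (split; auto). intros a b Hab. exfalso. apply Hunbounded. eauto. }
  destruct (exists_tight_upper_bound (fun n => Re (f n))) as (hi & Hhi & Hhi_tight);
    [exists b0; intro n; apply Hab0 |].
  destruct (exists_tight_upper_bound (fun n => - Re (f n))) as (mlo & Hlo & Hlo_tight);
    [exists (- a0); intro n; specialize (Hab0 n); lra |].
  assert (Hlohi : - mlo <= hi) by (specialize (Hhi 0%nat); specialize (Hlo 0%nat); lra).
  exists (fun n => RtoC (Rmax (- mlo) (Rmin hi (Re (h n))))). split; [apply U_clamp; auto | split].
  - eapply Rle_trans; [| exact Hdh]. apply L2_dominated; [apply L2_dist; auto |].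
    intro n. apply clamp_sqmod_le; [apply Hab0 |]. specialize (Hhi n). specialize (Hlo n). lra.
  - intros a b Hab n.
    assert (a <= - mlo) by (enough (mlo <= - a) by lra; apply Hlo_tight; intro m;
                              specialize (Hab m); lra).
    assert (hi <= b) by (apply Hhi_tight; intro m; apply Hab).
    unfold Re, Im, RtoC; simpl. split; auto. unfold Rmax, Rmin. repeat destruct Rle_dec; lra.
Qed.

Lemma minimizer_glb Psi d h : dist_ge_subseqs Psi d -> 0 <= d -> U Psi h ->
  sqnorm Psi (fun n => Cminus (f n) (h n)) <= d ^ 2 ->
  is_glb_Rbar (fun x => exists g, U Psi g /\ x = normPhi Psi (fun n => Cminus (f n) (g n)))
              (normPhi Psi (fun n => Cminus (f n) (h n))).
Proof.
  intros HS Hd Hh Hdh.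
  assert (Hle : normPhi Psi (fun n => Cminus (f n) (h n)) <= d).
  { rewrite normPhi_sqnorm, sqrt_le_iff; auto using sqnorm_nonneg. }
  split.
  - intros x (g & Hg & ->). simpl. pose proof (HS (fun n => n) g increasing_id Hg).
    change (subseq Psi (fun n => n)) with Psi in *. lra.
  - intros c Hc. apply Hc. exists h. auto.
Qed.

End ProjectionFamily.

Theorem theorem3p9 (U : seq_sets -> (nat -> C) -> Prop) (Phi : seq_sets) (f : nat -> C) :
  projection_family U -> Folner Phi -> L2 Phi f ->
  exists (phi : nat -> nat) (fU : nat -> C),
    (forall k, (phi k < phi (S k))%nat) /\
    let Psi := fun N => Phi (phi N) in
    U Psi fU /\
    in_perp U Psi (fun n => Cminus (f n) (fU n)) /\
    is_glb_Rbar (fun x => exists g, U Psi g /\ x = normPhi Psi (fun n => Cminus (f n) (g n)))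
                (normPhi Psi (fun n => Cminus (f n) (fU n))) /\
    (forall a b : R,
       (forall n, Im (f n) = 0 /\ a <= Re (f n) <= b) ->
       (forall n, Im (fU n) = 0 /\ a <= Re (fU n) <= b)).
Proof.
  intros PF HF Hf.
  destruct (exists_dist_stable_subseq U PF f Phi HF Hf) as (phi & d & Hphi & Hd & HS & HA).
  assert (HFphi : Folner (subseq Phi phi)) by (apply Folner_subseq; auto).
  destruct (exists_minimizer U PF f (subseq Phi phi) d) as (s & h & Hs & Hh & Hdh);
    auto using L2_subseq.
  set (Psi := subseq (subseq Phi phi) s).
  assert (HFPsi : Folner Psi) by (apply Folner_subseq; auto).
  assert (HfPsi : L2 Psi f) by (apply L2_subseq; auto using L2_subseq).
  assert (HSPsi : dist_ge_subseqs U f Psi d) by (apply dist_ge_subseqs_subseq; auto).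
  destruct (clamp_minimizer U PF f Psi d h) as (fU & HfU & HdfU & Hrange); auto.
  exists (fun n => phi (s n)), fU. split; [exact (increasing_comp phi s Hphi Hs) |].
  cbv zeta. change (fun N => Phi (phi (s N))) with Psi.
  split; [| split; [| split]]; auto.
  - apply (minimizer_perp U PF f Psi d); auto.
  - apply (minimizer_glb U f Psi d); auto.
Qed.
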